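(* Let $h:X\to\mathbb{R}$ be convex and continuous and $f=g+h$. Let $x_0\in X$, let $\beta_i\ge 2\mathcal{L}$ for all $i\ge0$, and define the iterates $x_i=\mathrm{Prox}^h_{\beta_{i-1}}(\nabla G(x_{i-1},\omega_i),x_{i-1};x_0)$, $i=1,\dots,N$, and $\widehat x_N=\big[\sum_{i=1}^N\beta_{i-1}^{-1}\big]^{-1}\sum_{i=1}^N\beta_{i-1}^{-1}x_i$. Put $\zeta_i=\nabla G(x_{i-1},\omega_i)-\nabla g(x_{i-1})$ and $V=V_{x_0}$. Then there exist points $z_0=x_0,z_1,\dots,z_{N-1}\in X$, with $z_i$ a (measurable) function of $x_0,\zeta_1,\dots,\zeta_i$ only, such that for every realization and every $z\in X$, $$\Big[\sum_{i=1}^N\beta_{i-1}^{-1}\Big][f(\widehat x_N)-f(z)]\le\sum_{i=1}^N\beta_{i-1}^{-1}[f(x_i)-f(z)]\le V(x_0,z)-V(x_N,z)+\sum_{i=1}^N\Big[\frac{\langle\zeta_i,z-x_{i-1}\rangle}{\beta_{i-1}}+\frac{\|\zeta_i\|_*^2}{\beta_{i-1}^2}\Big]$$ $$\le 2V(x_0,z)+\sum_{i=1}^N\Big[\frac{\langle\zeta_i,z_{i-1}-x_{i-1}\rangle}{\beta_{i-1}}+\frac32\,\frac{\|\zeta_i\|_*^2}{\beta_{i-1}^2}\Big].$$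
   Context: $E$ is a finite-dimensional real Euclidean space with inner product $\langle\cdot,\cdot\rangle$; $\|\cdot\|$ is a norm on $E$ with conjugate norm $\|s\|_*=\max\{\langle s,x\rangle:\|x\|\le1\}$. $X\subset E$ is convex and closed with nonempty interior. $G:X\times\Omega\to\mathbb{R}$ with $G(\cdot,\omega)$ differentiable, $g(x)=\mathbb{E}\{G(x,\omega)\}$ finite, convex, differentiable on $X$ with $\|\nabla g(x)-\nabla g(x')\|_*\le\mathcal{L}\|x-x'\|$. $\omega_1,\omega_2,\dots$ are i.i.d. copies of $\omega$. $\vartheta:E\to\mathbb{R}$ is continuously differentiable, convex, with $\langle\nabla\vartheta(x)-\nabla\vartheta(x'),x-x'\rangle\ge\|x-x'\|^2$, and $\vartheta(x)\ge\vartheta(0)=0$. Bregman divergence: $V_{x_0}(x,z)=\vartheta(z-x_0)-\vartheta(x-x_0)-\langle\nabla\vartheta(x-x_0),z-x\rangle$. Composite proximal mapping: $\mathrm{Prox}^h_\beta(u,x;x_0)=\arg\min_{z\in X}\{\langle u,z\rangle+h(z)+\beta V_{x_0}(x,z)\}$. *)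

(* mathcomp-analysis over an abstract R : realType.
   E is modelled as 'rV[R]_n with the standard inner product. *)
From HB Require Import structures.
From mathcomp Require Import all_boot all_order all_algebra.
From mathcomp Require Import all_classical all_reals all_analysis.
Set Implicit Arguments. Unset Strict Implicit. Unset Printing Implicit Defensive.
Import Order.TTheory GRing.Theory Num.Theory.
Import numFieldNormedType.Exports.
Local Open Scope classical_set_scope.
Local Open Scope ring_scope.

Section Defs.
Variables (R : realType) (n : nat).
Local Notation E := 'rV[R]_n.

Definition ip (u v : E) : R := \sum_(k < n) u ord0 k * v ord0 k.

Definition is_norm (nrm : E -> R) : Prop :=
  [/\ forall x, 0 <= nrm x,
      forall x, nrm x = 0 -> x = 0,
      forall (a : R) x, nrm (a *: x) = `|a| * nrm x
    & forall x y, nrm (x + y) <= nrm x + nrm y].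

Definition dual_norm (nrm : E -> R) (s : E) : R :=
  sup [set ip s x | x in [set x | nrm x <= 1]].

Definition is_grad_within (X : set E) (F : E -> R) (x d : E) : Prop :=
  forall e : R, 0 < e -> exists2 del : R, 0 < del &
    forall y, X y -> `|y - x| < del ->
      `|F y - F x - ip d (y - x)| <= e * `|y - x|.

Definition breg (th : E -> R) (dth : E -> E) (x0 x z : E) : R :=
  th (z - x0) - th (x - x0) - ip (dth (x - x0)) (z - x).

Definition is_prox (X : set E) (th : E -> R) (dth : E -> E) (h : E -> R)
  (beta : R) (u x x0 p : E) : Prop :=
  X p /\ forall z, X z ->
    ip u p + h p + beta * breg th dth x0 x p <=
    ip u z + h z + beta * breg th dth x0 x z.

End Defs.

Definition borel_measurable (T U : topologicalType) (f : T -> U) : Prop :=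
  forall A : set U, open A -> <<s open >> (f @^-1` A).

From HB Require Import structures.
From mathcomp Require Import all_boot all_order all_algebra.
From mathcomp Require Import all_classical all_reals all_analysis.
Import Order.TTheory GRing.Theory Num.Theory.
Import numFieldNormedType.Exports.
Local Open Scope classical_set_scope.
Local Open Scope ring_scope.
From mathcomp Require Import ring lra.

(* Next, th is shown to be 1-strongly convex, so V(x,z) >= ||z - x||^2 / 2,
   and g satisfies the descent lemma; both follow by summing gradient
   inequalities along a subdivision of a segment and refining it.
   These give the one-step inequality of a prox step with noisy gradient
   dg x + zeta, whose telescoped sum is the second claimed inequality; the
   first is Jensen's inequality.  For the third, the auxiliary points z_i are
   the mirror-descent iterates driven by the noise vectors zeta_i; they are
   continuous (hence Borel) functions of zeta_1..zeta_i, and their regret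
   bound absorbs the term <zeta_i, z - z_{i-1}>. *)

Set Implicit Arguments. Unset Strict Implicit. Unset Printing Implicit Defensive.

Section InnerProduct.
Variables (R : realType) (n : nat).
Local Notation E := 'rV[R]_n.
Implicit Types (u v w : E).

Lemma ipDl u v w : ip (u + v) w = ip u w + ip v w.
Proof. by rewrite /ip -big_split; apply: eq_bigr => k _; rewrite !mxE mulrDl. Qed.
Lemma ipDr u v w : ip w (u + v) = ip w u + ip w v.
Proof. by rewrite /ip -big_split; apply: eq_bigr => k _; rewrite !mxE mulrDr. Qed.
Lemma ipZl a u w : ip (a *: u) w = a * ip u w.
Proof. by rewrite /ip mulr_sumr; apply: eq_bigr => k _; rewrite !mxE mulrA. Qed.
Lemma ipZr a u w : ip w (a *: u) = a * ip w u.
Proof. by rewrite /ip mulr_sumr; apply: eq_bigr => k _; rewrite !mxE mulrCA. Qed.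
Lemma ipNl u w : ip (- u) w = - ip u w.
Proof. by rewrite -scaleN1r ipZl mulN1r. Qed.
Lemma ipNr u w : ip w (- u) = - ip w u.
Proof. by rewrite -scaleN1r ipZr mulN1r. Qed.
Lemma ipBl u v w : ip (u - v) w = ip u w - ip v w.
Proof. by rewrite ipDl ipNl. Qed.
Lemma ipBr u v w : ip w (u - v) = ip w u - ip w v.
Proof. by rewrite ipDr ipNr. Qed.
Lemma ip0r w : ip w 0 = 0.
Proof. by rewrite -(scale0r 0) ipZr mul0r. Qed.

Lemma mx_norm_entry m p (A : 'M[R]_(m, p)) i j : `|A i j| <= `|A|.
Proof.
rewrite (_ : `|A| = mx_norm A) // mx_normrE; apply/bigmax_geP; right => /=.
by exists (i, j).
Qed.

Lemma mx_norm_le_entries m p (A : 'M[R]_(m, p)) e : 0 <= e ->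
  (forall i j, `|A i j| <= e) -> `|A| <= e.
Proof.
by move=> e0 H; rewrite (_ : `|A| = mx_norm A) // mx_normrE; apply/bigmax_leP.
Qed.

Lemma ip_bound u v : `|ip u v| <= n%:R * `|u| * `|v|.
Proof.
rewrite /ip (le_trans (ler_norm_sum _ _ _)) //.
apply: (@le_trans _ _ (\sum_(k < n) (`|u| * `|v|))).
  by apply: ler_sum => k _; rewrite normrM; apply: ler_pM; rewrite ?mx_norm_entry.
by rewrite sumr_const card_ord -mulrA mulr_natl.
Qed.

End InnerProduct.

Section RealFacts.
Variable R : realType.

Lemma le0_of_small (x K : R) : (forall e : R, 0 < e -> x <= e * K) -> x <= 0.
Proof.
move=> H; rewrite leNgt; apply/negP => x0.
have [K0|K0] := leP K 0.
  by have := H 1 ltr01; rewrite mul1r => /le_trans/(_ K0); rewrite leNgt x0.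
have := H (x / (2 * K)) (divr_gt0 x0 (mulr_gt0 (ltr0Sn _ 1) K0)).
have -> : x / (2 * K) * K = x / 2 by field; rewrite gt_eqF.
lra.
Qed.

Lemma le_of_vanishing (A B C : R) :
  (forall m : nat, (0 < m)%N -> A <= B + C / m%:R) -> A <= B.
Proof.
move=> H; apply/ler_addgt0Pr => e e0.
have [C0|C0] := leP C 0.
  by have := H 1%N isT; rewrite divr1; lra.
apply: le_trans (H (Num.truncn (C / e)).+1 isT) _; rewrite lerD2l.
rewrite ler_pdivrMr ?ltr0n // mulrC -ler_pdivrMr //; exact/ltW/truncnS_gt.
Qed.

Lemma sum_increments_ge (a : nat -> R) (q c : R) m :
  (forall k, (k < m)%N -> q + c * k%:R <= a k.+1 - a k) ->
  q * m%:R + c * (m%:R * (m%:R - 1) / 2) <= a m - a 0%N.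
Proof.
elim: m => [|m IH] H; first by rewrite subrr; lra.
have {}IH := IH (fun k km => H k (ltnW km)).
have := H m (ltnSn m); rewrite -natr1.
have -> : q * (m%:R + 1) + c * ((m%:R + 1) * (m%:R + 1 - 1) / 2) =
  q * m%:R + c * (m%:R * (m%:R - 1) / 2) + (q + c * m%:R) by field.
lra.
Qed.

Lemma young (a b r : R) : 0 < b -> a * r - b * r ^+ 2 / 4 <= a ^+ 2 / b.
Proof.
move=> b0; rewrite -subr_ge0.
have -> : a ^+ 2 / b - (a * r - b * r ^+ 2 / 4) = (a - b * r / 2) ^+ 2 / b.
  by field; rewrite gt_eqF.
by rewrite divr_ge0 ?sqr_ge0 ?ltW.
Qed.

Lemma sum_telescope (u : nat -> R) N :
  \sum_(i < N) (u i - u i.+1) = u 0%N - u N.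
Proof.
elim: N => [|N IH]; first by rewrite big_ord0 subrr.
by rewrite big_ord_recr /= IH; ring.
Qed.

End RealFacts.

Lemma continuous_of_local_bound (R : realType) (V W : normedModType R)
    (f : V -> W) :
  (forall x, exists2 d : R, 0 < d & exists K : R, forall y, `|x - y| < d ->
     `|f x - f y| <= K * `|x - y|) -> continuous f.
Proof.
move=> H x; apply/cvgrPdist_le => e e0.
have [d d0 [K HK]] := H x.
pose r : R := Num.min d (e / (`|K| + 1)).
have r0 : 0 < r by rewrite /r lt_min d0 divr_gt0 // ltr_pwDr.
have rd : r <= d by rewrite /r ge_min lexx.
have re : r <= e / (`|K| + 1) by rewrite /r ge_min lexx orbT.
apply/nbhs_normP; exists r => // y /= yr.
apply: (le_trans (HK y (lt_le_trans yr rd))); apply: (le_trans (ler_norm _)).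
rewrite normrM normr_id; apply: (@le_trans _ _ (`|K| * (e / (`|K| + 1)))).
  by rewrite ler_wpM2l // ltW // (lt_le_trans yr re).
rewrite mulrA ler_pdivrMr; last by rewrite ltr_pwDr.
have := normr_ge0 K; nra.
Qed.

(* The norm nrm is equivalent to the sup-norm of 'rV_n; hence the dual norm
   is a finite supremum and bounds the inner product. *)
Section Norm.
Variables (R : realType) (n : nat) (nrm : 'rV[R]_n -> R).
Hypothesis hn : is_norm nrm.
Local Notation E := 'rV[R]_n.
Implicit Types (x y : E).

Lemma nrm_ge0 x : 0 <= nrm x. Proof. by case: hn. Qed.
Lemma nrmZ a x : nrm (a *: x) = `|a| * nrm x. Proof. by case: hn. Qed.
Lemma nrm_tri x y : nrm (x + y) <= nrm x + nrm y. Proof. by case: hn. Qed.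
Lemma nrm_eq0 x : nrm x = 0 -> x = 0. Proof. by case: hn => _ H _ _; exact: H. Qed.
Lemma nrm0 : nrm 0 = 0.
Proof. by rewrite -(scale0r (0 : E)) nrmZ normr0 mul0r. Qed.
Lemma nrmB x y : nrm (x - y) = nrm (y - x).
Proof. by rewrite -opprB -scaleN1r nrmZ normrN normr1 mul1r. Qed.

Lemma nrm_sum m (F : 'I_m -> E) : nrm (\sum_(i < m) F i) <= \sum_(i < m) nrm (F i).
Proof.
elim/big_ind2 : _ => [|a b c d H1 H2|//]; first by rewrite nrm0.
by apply: (le_trans (nrm_tri _ _)); exact: lerD.
Qed.

(* Upper equivalence constant, from the triangle inequality on a basis. *)
Lemma nrm_le_sup : exists K, forall x, nrm x <= K * `|x|.
Proof.
exists (\sum_(k < n) nrm (delta_mx 0 k : E)) => x.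
rewrite {1}(row_sum_delta x); apply: (le_trans (nrm_sum _)).
rewrite mulr_suml; apply: ler_sum => k _; rewrite nrmZ mulrC.
by apply: ler_wpM2l; [exact: nrm_ge0 | exact: mx_norm_entry].
Qed.

Lemma nrm_continuous : continuous nrm.
Proof.
have [K HK] := nrm_le_sup.
apply: continuous_of_local_bound => x; exists 1 => //; exists K => y _.
apply: (le_trans _ (HK _)); rewrite ler_norml.
have h1 := nrm_tri (x - y) y; have h2 := nrm_tri (y - x) x.
rewrite subrK in h1; rewrite subrK nrmB in h2.
by apply/andP; split; lra.
Qed.

(* Lower equivalence constant: the minimum of nrm on the unit sphere. *)
Lemma nrm_ge_sup : exists2 c, 0 < c & forall x, c * `|x| <= nrm x.
Proof.
pose S := [set x : E | `|x| = 1].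
have SN x : x != 0 -> S (`|x|^-1 *: x).
  move=> x0; rewrite /S /= normrZ normrV ?unitfE ?normr_eq0 // normr_id.
  by rewrite mulVf // normr_eq0.
have key c : 0 < c -> (forall s, S s -> c <= nrm s) ->
    forall x, c * `|x| <= nrm x.
  move=> c0 H x; have [->|x0] := eqVneq x 0; first by rewrite normr0 mulr0 nrm0.
  have := H _ (SN x x0); rewrite nrmZ normrV ?unitfE ?normr_eq0 // normr_id.
  by rewrite ler_pdivlMl ?normr_gt0 // mulrC.
have [[s0 Ss0]|S0] := pselect (S !=set0); last first.
  by exists 1 => //; apply: key => // s Ss; exfalso; apply: S0; exists s.
have cS : compact S.
  apply: bounded_closed_compact.
    by exists 1; split => // M M1 x Sx /=; rewrite Sx; exact: ltW.
  have := @preimage_closed _ _ (fun x : E => `|x|) _ _ (@closed_eq R 1).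
  by apply => x _; exact: norm_continuous.
have [c /set_mem Sc cmin] := EVT_min_rV (ex_intro _ s0 Ss0 : S !=set0) cS
  (continuous_subspaceT nrm_continuous).
have c0 : 0 < nrm c.
  rewrite lt_neqAle nrm_ge0 andbT eq_sym; apply/eqP => /nrm_eq0 c0.
  by move: Sc; rewrite /S /= c0 normr0 => /esym/eqP; rewrite oner_eq0.
by exists (nrm c) => //; apply: key => // s Ss; apply: cmin; exact/mem_set.
Qed.

Lemma dual_norm_has_sup s : has_sup [set ip s x | x in [set x | nrm x <= 1]].
Proof.
split; first by exists 0, 0; rewrite /= ?nrm0 ?ip0r.
have [c c0 Hc] := nrm_ge_sup.
exists (n%:R * `|s| / c) => _ [x /= x1 <-].
apply: (le_trans (ler_norm _)); apply: (le_trans (ip_bound _ _)).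
apply: ler_wpM2l; first by rewrite mulr_ge0.
rewrite -(ler_pM2l c0) mulfV ?gt_eqF //; exact: (le_trans (Hc x) x1).
Qed.

Lemma dual_norm_ge0 s : 0 <= dual_norm nrm s.
Proof.
apply: sup_upper_bound; first exact: dual_norm_has_sup.
by exists 0; rewrite /= ?nrm0 ?ip0r.
Qed.

Lemma ip_le_dual s x : ip s x <= dual_norm nrm s * nrm x.
Proof.
have [->|x0] := eqVneq x 0; first by rewrite ip0r nrm0 mulr0.
have nx0 : 0 < nrm x.
  by rewrite lt_neqAle nrm_ge0 andbT eq_sym; apply/eqP => /nrm_eq0/eqP; rewrite (negbTE x0).
have H : ip s ((nrm x)^-1 *: x) <= dual_norm nrm s.
  apply: sup_upper_bound; first exact: dual_norm_has_sup.
  exists ((nrm x)^-1 *: x) => //=.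
  by rewrite nrmZ ger0_norm ?invr_ge0 ?nrm_ge0 // mulVf ?gt_eqF.
by move: H; rewrite ipZr mulrC ler_pdivrMr.
Qed.

End Norm.

Section Segment.
Variables (R : realType) (n : nat).
Local Notation E := 'rV[R]_n.
Implicit Types (D : set E) (F : E -> R) (p x z d : E).

Lemma convex_set_seg D x y (t : R) : convex_set D -> D x -> D y ->
  0 <= t -> t <= 1 -> D (t *: x + (1 - t) *: y).
Proof.
move=> cD Dx Dy t0 t1.
exact/set_mem/(cD x y (Itv01 t0 t1) (mem_set Dx) (mem_set Dy)).
Qed.

Lemma convex_fun_seg D F x y (t : R) : convex_function D F ->
  D x -> D y -> 0 <= t -> t <= 1 ->
  F (t *: x + (1 - t) *: y) <= t * F x + (1 - t) * F y.
Proof.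
move=> cF Dx Dy t0 t1.
exact: (cF (Itv01 t0 t1) x y (mem_set Dx) (mem_set Dy)).
Qed.

Lemma convex_setT : convex_set (setT : set E).
Proof. by move=> x y l _ _; rewrite in_setE. Qed.

Lemma convex_add D F1 F2 : convex_function D F1 -> convex_function D F2 ->
  convex_function D (fun x => F1 x + F2 x).
Proof.
move=> c1 c2 t x y Dx Dy; have := c1 t x y Dx Dy; have := c2 t x y Dx Dy.
rewrite !convRE /=; lra.
Qed.

Lemma convex_zero D : convex_function D (fun _ : E => 0 : R).
Proof. by move=> t x y _ _; rewrite convRE !mulr0 addr0. Qed.

Lemma grad_along_segment D F p z d (e : R) :
  convex_set D -> D p -> D z -> is_grad_within D F p d -> 0 < e ->
  exists t : R, [/\ 0 < t, t <= 1, D (t *: z + (1 - t) *: p) &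
    `|F (t *: z + (1 - t) *: p) - F p - t * ip d (z - p)| <= t * (e * `|z - p|)].
Proof.
move=> cD Dp Dz Fg e0.
have [del del0 Hd] := Fg e e0.
pose t := del / (del + `|z - p|).
have dN : 0 < del + `|z - p| by rewrite ltr_wpDr.
have t0 : 0 < t by rewrite divr_gt0.
have t1 : t <= 1 by rewrite ler_pdivrMr // mul1r lerDl.
have tN : t * `|z - p| < del.
  by rewrite mulrAC ltr_pdivrMr //; have := normr_ge0 (z - p); nra.
have Dy := convex_set_seg cD Dz Dp (ltW t0) t1.
exists t; split => //.
have yp : t *: z + (1 - t) *: p - p = t *: (z - p).
  by apply/rowP => k; rewrite !mxE; ring.
have := Hd _ Dy; rewrite yp normrZ ger0_norm ?(ltW t0) // ipZr => /(_ tN).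
by rewrite mulrCA.
Qed.

Lemma convex_grad_ineq D F x z d : convex_set D -> convex_function D F ->
  D x -> D z -> is_grad_within D F x d -> F x + ip d (z - x) <= F z.
Proof.
move=> cD cF Dx Dz Fg.
suff : ip d (z - x) - (F z - F x) <= 0 by lra.
apply: (@le0_of_small _ _ `|z - x|) => e e0.
have [t [t0 t1 _ /ler_normlP [hy _]]] := grad_along_segment cD Dx Dz Fg e0.
have hc := convex_fun_seg cF Dz Dx (ltW t0) t1.
rewrite -(ler_pM2l t0); nra.
Qed.

Lemma min_first_order D F Phi p d : convex_set D -> convex_function D F ->
  D p -> is_grad_within D Phi p d ->
  (forall y, D y -> F p + Phi p <= F y + Phi y) ->
  forall z, D z -> 0 <= F z - F p + ip d (z - p).
Proof.
move=> cD cF Dp Phig pmin z Dz.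
rewrite -oppr_le0; apply: (@le0_of_small _ _ `|z - p|) => e e0.
have [t [t0 t1 Dy /ler_normlP [_ hy]]] := grad_along_segment cD Dp Dz Phig e0.
have hc := convex_fun_seg cF Dz Dp (ltW t0) t1.
have hm := pmin _ Dy.
rewrite -(ler_pM2l t0); nra.
Qed.

Lemma jensen D F (w : nat -> R) (xs : nat -> E) m :
  convex_set D -> convex_function D F -> (forall i, 0 < w i) ->
  (forall i, (i < m)%N -> D (xs i)) -> (0 < m)%N ->
  D ((\sum_(i < m) w i)^-1 *: \sum_(i < m) w i *: xs i) /\
  (\sum_(i < m) w i) * F ((\sum_(i < m) w i)^-1 *: \sum_(i < m) w i *: xs i)
    <= \sum_(i < m) w i * F (xs i).
Proof.
move=> cD cF w0; elim: m => [//|m IH] Ds _.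
have [->|mpos] := eqVneq m 0%N.
  rewrite !big_ord1 scalerA mulVf ?gt_eqF // scale1r.
  by split; [exact: Ds | rewrite lexx].
have m0 : (0 < m)%N by rewrite lt0n.
have [IH1 IH2] := IH (fun i im => Ds i (ltnW im)) m0.
set S := \sum_(i < m) w i in IH1 IH2.
set V := \sum_(i < m) w i *: xs i in IH1 IH2.
have S0 : 0 < S.
  apply: (lt_le_trans (w0 0%N)).
  rewrite /S (bigD1 (Ordinal m0)) //= lerDl.
  by apply: sumr_ge0 => i _; exact: ltW.
rewrite !big_ord_recr /= -/S -/V.
have S'0 : 0 < S + w m by rewrite addr_gt0.
pose t := S / (S + w m).
have t0 : 0 <= t by rewrite divr_ge0 // ltW.
have t1 : t <= 1 by rewrite ler_pdivrMr // mul1r lerDl ltW.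
have -> : (S + w m)^-1 *: (V + w m *: xs m) = t *: (S^-1 *: V) + (1 - t) *: xs m.
  rewrite scalerA /t mulrAC mulfV ?gt_eqF // mul1r scalerDr scalerA.
  by congr (_ + _); congr (_ *: _); field; rewrite ?gt_eqF.
split; first by apply: convex_set_seg => //; exact: Ds.
apply: (le_trans (ler_wpM2l (ltW S'0) (convex_fun_seg cF IH1 (Ds m (ltnSn m)) t0 t1))).
have -> : (S + w m) * (t * F (S^-1 *: V) + (1 - t) * F (xs m)) =
  S * F (S^-1 *: V) + w m * F (xs m) by rewrite /t; field; rewrite gt_eqF.
lra.
Qed.

Lemma jensen_gap D F (w : nat -> R) (xs : nat -> E) m z :
  convex_set D -> convex_function D F -> (forall i, 0 < w i) ->
  (forall i, (i < m)%N -> D (xs i)) -> (0 < m)%N ->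
  (\sum_(i < m) w i) * (F ((\sum_(i < m) w i)^-1 *: \sum_(i < m) w i *: xs i) - F z)
    <= \sum_(i < m) w i * (F (xs i) - F z).
Proof.
move=> cD cF w0 Ds m0; have [_ J] := jensen cD cF w0 Ds m0.
have -> : \sum_(i < m) w i * (F (xs i) - F z) =
    \sum_(i < m) w i * F (xs i) - (\sum_(i < m) w i) * F z.
  by rewrite mulr_suml -sumrB; apply: eq_bigr => i _; ring.
by rewrite mulrBr; lra.
Qed.

End Segment.

Section DistanceGenerating.
Variables (R : realType) (n : nat) (nrm : 'rV[R]_n -> R).
Variables (th : 'rV[R]_n -> R) (dth : 'rV[R]_n -> 'rV[R]_n).
Hypothesis hgrad : forall x, is_grad_within setT th x (dth x).
Hypothesis hcvx : convex_function setT th.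
Hypothesis hmono : forall x x', nrm (x - x') ^+ 2 <= ip (dth x - dth x') (x - x').
Hypothesis hn : is_norm nrm.
Local Notation E := 'rV[R]_n.
Local Notation V := (breg th dth).
Implicit Types (a b p x z : E).

Lemma dgf_mono_ray b (w : E) (s : R) : 0 <= s ->
  s * nrm w ^+ 2 <= ip (dth (b + s *: w) - dth b) w.
Proof.
rewrite le_eqVlt => /orP [/eqP <-|s0]; first by rewrite mul0r scale0r addr0 ipBl subrr.
have := hmono (b + s *: w) b.
rewrite addrAC subrr add0r nrmZ // ipZr ger0_norm ?(ltW s0) // exprMn => h.
rewrite -(ler_pM2l s0); nra.
Qed.

(* 1-strong convexity of th, by summing gradient inequalities along a
   subdivision of [b, a] into m pieces and letting m grow. *)
Lemma dgf_strong_convex a b :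
  th b + ip (dth b) (a - b) + nrm (a - b) ^+ 2 / 2 <= th a.
Proof.
set w := a - b; set Q := ip (dth b) w; set Nw := nrm w ^+ 2.
apply: (@le_of_vanishing _ _ _ (Nw / 2)) => m m0.
set M : R := m%:R; have M0 : 0 < M by rewrite ltr0n.
pose y k := b + (k%:R / M) *: w.
have step k : (k < m)%N -> Q / M + Nw / M ^+ 2 * k%:R <= th (y k.+1) - th (y k).
  move=> _.
  have gi := convex_grad_ineq (z := y k.+1) (@convex_setT R n) hcvx I I (hgrad (y k)).
  have ed : y k.+1 - y k = M^-1 *: w.
    by apply/rowP => j; rewrite /y !mxE -natr1; field; rewrite gt_eqF.
  rewrite ed ipZr in gi.
  have mono : k%:R / M * Nw <= ip (dth (y k)) w - Q.
    by rewrite -ipBl; apply: dgf_mono_ray; rewrite divr_ge0 ?ler0n ?ltW.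
  have h : M^-1 * (Q + k%:R / M * Nw) <= M^-1 * ip (dth (y k)) w.
    by apply: ler_wpM2l; [rewrite invr_ge0 ltW | lra].
  have -> : Q / M + Nw / M ^+ 2 * k%:R = M^-1 * (Q + k%:R / M * Nw).
    by field; rewrite gt_eqF.
  lra.
have := @sum_increments_ge _ (fun k => th (y k)) _ _ m step.
have -> : y m = a by rewrite /y divff ?gt_eqF // scale1r /w addrC subrK.
have -> : y 0%N = b by rewrite /y (_ : (0%:R : R) = 0) // mul0r scale0r addr0.
have -> : Q / M * m%:R + Nw / M ^+ 2 * (m%:R * (m%:R - 1) / 2) =
  Q + Nw / 2 - Nw / 2 / M by rewrite -/M; field; rewrite gt_eqF.
lra.
Qed.

Lemma breg_lb x0 x z : nrm (z - x) ^+ 2 / 2 <= V x0 x z.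
Proof.
have := dgf_strong_convex (z - x0) (x - x0).
have -> : z - x0 - (x - x0) = z - x by apply/rowP => k; rewrite !mxE; ring.
rewrite /breg; lra.
Qed.

Lemma breg_ge0 x0 x z : 0 <= V x0 x z.
Proof. by apply: le_trans (breg_lb x0 x z); rewrite divr_ge0 ?sqr_ge0. Qed.

Lemma breg_three_point x0 x p z :
  V x0 x z - V x0 p z - V x0 x p = ip (dth (p - x0) - dth (x - x0)) (z - p).
Proof. by rewrite /breg !ipBr !ipBl; ring. Qed.

Definition mirror_obj x0 a (b : R) (y : E) : R := ip a y + b * th (y - x0).

Lemma mirror_obj_grad (D : set E) x0 a (b : R) p : 0 <= b ->
  is_grad_within D (mirror_obj x0 a b) p (a + b *: dth (p - x0)).
Proof.
move=> b0 e e0.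
have b1 : 0 < b + 1 by lra.
have [del del0 Hd] := hgrad (p - x0) (divr_gt0 e0 b1).
exists del => // y _ yp.
have := Hd (y - x0) I.
have -> : y - x0 - (p - x0) = y - p by apply/rowP => k; rewrite !mxE; ring.
move=> /(_ yp) h.
have -> : mirror_obj x0 a b y - mirror_obj x0 a b p - ip (a + b *: dth (p - x0)) (y - p)
    = b * (th (y - x0) - th (p - x0) - ip (dth (p - x0)) (y - p)).
  by rewrite /mirror_obj ipDl ipZl ipBr; ring.
rewrite normrM ger0_norm //; apply: le_trans (ler_wpM2l b0 h) _.
have be : b * (e / (b + 1)) <= e by rewrite mulrA ler_pdivrMr //; nra.
by rewrite mulrA; apply: ler_wpM2r be.
Qed.

Lemma prox_three_point (X : set E) h (b : R) u x0 x p z :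
  convex_set X -> convex_function X h -> 0 <= b ->
  is_prox X th dth h b u x x0 p -> X z ->
  0 <= h z - h p + ip u (z - p) + b * (V x0 x z - V x0 p z - V x0 x p).
Proof.
move=> cX ch b0 [Xp pmin] Xz.
set a := u - b *: dth (x - x0).
have amin y : X y -> h p + mirror_obj x0 a b p <= h y + mirror_obj x0 a b y.
  move=> Xy; have := pmin y Xy; rewrite /mirror_obj /breg !ipBl !ipZl !ipBr; lra.
have := min_first_order cX ch Xp (@mirror_obj_grad X x0 a b p b0) amin Xz.
by rewrite breg_three_point /a !ipDl !ipNl !ipZl; lra.
Qed.

End DistanceGenerating.

Section Smooth.
Variables (R : realType) (n : nat) (nrm : 'rV[R]_n -> R).
Variables (X : set 'rV[R]_n) (g : 'rV[R]_n -> R) (dg : 'rV[R]_n -> 'rV[R]_n) (L : R).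
Hypothesis hn : is_norm nrm.
Hypothesis cX : convex_set X.
Hypothesis cg : convex_function X g.
Hypothesis gg : forall x, X x -> is_grad_within X g x (dg x).
Hypothesis lip : forall x x', X x -> X x' -> dual_norm nrm (dg x - dg x') <= L * nrm (x - x').
Local Notation E := 'rV[R]_n.
Implicit Types (p x : E).

Lemma grad_lip_ray x (w : E) (s : R) : 0 < s -> X x -> X (x + s *: w) ->
  ip (dg (x + s *: w) - dg x) w <= L * s * nrm w ^+ 2.
Proof.
move=> s0 Xx Xy.
have hl := lip Xy Xx.
rewrite addrAC subrr add0r nrmZ // ger0_norm ?(ltW s0) // in hl.
have h := ip_le_dual hn (dg (x + s *: w) - dg x) (s *: w).
rewrite ipZr nrmZ // ger0_norm ?(ltW s0) // in h.
have snw : 0 <= s * nrm w by rewrite mulr_ge0 ?(ltW s0) ?nrm_ge0.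
have := ler_wpM2r snw hl.
rewrite -(ler_pM2l s0); nra.
Qed.

Lemma descent_lemma x p : X x -> X p ->
  g p <= g x + ip (dg x) (p - x) + L / 2 * nrm (p - x) ^+ 2.
Proof.
move=> Xx Xp.
set w := p - x; set Q := ip (dg x) w; set Nw := nrm w ^+ 2.
apply: (@le_of_vanishing _ _ _ (L * Nw / 2)) => m m0.
set M : R := m%:R; have M0 : 0 < M by rewrite ltr0n.
pose y k := x + (k%:R / M) *: w.
have Xy k : (k <= m)%N -> X (y k).
  move=> km; have -> : y k = (k%:R / M) *: p + (1 - k%:R / M) *: x.
    by apply/rowP => j; rewrite /y /w !mxE; ring.
  apply: convex_set_seg => //; first by rewrite divr_ge0 ?ler0n ?ltW.
  by rewrite ler_pdivrMr // mul1r ler_nat.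
have step k : (k < m)%N ->
    - Q / M - L * Nw / M ^+ 2 + (- L * Nw / M ^+ 2) * k%:R <= - g (y k.+1) - - g (y k).
  move=> km.
  have gi := convex_grad_ineq cX cg (Xy _ km) (Xy _ (ltnW km)) (gg (Xy _ km)).
  have ed : y k - y k.+1 = - (M^-1 *: w).
    by apply/rowP => j; rewrite /y !mxE -natr1; field; rewrite gt_eqF.
  rewrite ed ipNr ipZr in gi.
  have hl : ip (dg (y k.+1)) w - Q <= L * (k.+1%:R / M) * Nw.
    rewrite -ipBl; apply: (grad_lip_ray _ Xx (Xy _ km)).
    by rewrite divr_gt0 // ltr0n.
  have h : M^-1 * ip (dg (y k.+1)) w <= M^-1 * (Q + L * (k.+1%:R / M) * Nw).
    by apply: ler_wpM2l; [rewrite invr_ge0 ltW | lra].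
  rewrite -natr1 in h.
  have -> : - Q / M - L * Nw / M ^+ 2 + (- L * Nw / M ^+ 2) * k%:R =
    - (M^-1 * (Q + L * ((k%:R + 1) / M) * Nw)) by field; rewrite gt_eqF.
  lra.
have := @sum_increments_ge _ (fun k => - g (y k)) _ _ m step.
have -> : y m = p by rewrite /y divff ?gt_eqF // scale1r /w addrC subrK.
have -> : y 0%N = x by rewrite /y (_ : (0%:R : R) = 0) // mul0r scale0r addr0.
have -> : (- Q / M - L * Nw / M ^+ 2) * m%:R +
    (- L * Nw / M ^+ 2) * (m%:R * (m%:R - 1) / 2) =
  - (Q + L / 2 * Nw) - L * Nw / 2 / M by rewrite -/M; field; rewrite gt_eqF.
lra.
Qed.

End Smooth.

Section ProxStep.
Variables (R : realType) (n : nat) (nrm : 'rV[R]_n -> R) (X : set 'rV[R]_n).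
Variables (g h : 'rV[R]_n -> R) (dg : 'rV[R]_n -> 'rV[R]_n) (L : R).
Variables (th : 'rV[R]_n -> R) (dth : 'rV[R]_n -> 'rV[R]_n).
Hypothesis hn : is_norm nrm.
Hypothesis cX : convex_set X.
Hypothesis cg : convex_function X g.
Hypothesis gg : forall x, X x -> is_grad_within X g x (dg x).
Hypothesis lip : forall x x', X x -> X x' -> dual_norm nrm (dg x - dg x') <= L * nrm (x - x').
Hypothesis ch : convex_function X h.
Hypothesis hgrad : forall x, is_grad_within setT th x (dth x).
Hypothesis hcvx : convex_function setT th.
Hypothesis hmono : forall x x', nrm (x - x') ^+ 2 <= ip (dth x - dth x') (x - x').
Local Notation V := (breg th dth).

Lemma prox_step x0 x p z u (b : R) : X x -> X z -> 2 * L <= b -> 0 < b ->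
  is_prox X th dth h b u x x0 p ->
  b^-1 * (g p + h p - (g z + h z)) <=
    V x0 x z - V x0 p z + (ip (u - dg x) (z - x) / b + dual_norm nrm (u - dg x) ^+ 2 / b ^+ 2).
Proof.
move=> Xx Xz bL b0 hp; have Xp := hp.1.
have tp := prox_three_point hgrad cX ch (ltW b0) hp Xz.
have sm := descent_lemma hn cX cg gg lip Xx Xp.
have gi := convex_grad_ineq cX cg Xx Xz (gg Xx).
have lb := breg_lb hgrad hcvx hmono hn x0 x p.
have du := ip_le_dual hn (u - dg x) (x - p); rewrite (nrmB hn x p) in du.
set D := dual_norm nrm (u - dg x) in du *; set r := nrm (p - x) in sm lb du.
have yg := young D r b0.
have Lr : L / 2 * r ^+ 2 <= b / 4 * r ^+ 2.
  by apply: ler_wpM2r; [exact: sqr_ge0 | lra].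
have lb' := ler_wpM2l (ltW b0) lb.
have key : g p + h p - (g z + h z) <=
    ip (u - dg x) (z - x) + b * (V x0 x z - V x0 p z) + D ^+ 2 / b.
  move: tp sm gi du; rewrite !ipBl !ipBr; lra.
have -> : V x0 x z - V x0 p z + (ip (u - dg x) (z - x) / b + D ^+ 2 / b ^+ 2) =
    b^-1 * (ip (u - dg x) (z - x) + b * (V x0 x z - V x0 p z) + D ^+ 2 / b).
  by field; rewrite gt_eqF.
by rewrite ler_pM2l ?invr_gt0.
Qed.

End ProxStep.

Section MirrorMap.
Variables (R : realType) (n : nat) (nrm : 'rV[R]_n -> R).
Variables (th : 'rV[R]_n -> R) (dth : 'rV[R]_n -> 'rV[R]_n) (x0 : 'rV[R]_n).
Variable X : set 'rV[R]_n.
Hypothesis hgrad : forall x, is_grad_within setT th x (dth x).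
Hypothesis hcvx : convex_function setT th.
Hypothesis hmono : forall x x', nrm (x - x') ^+ 2 <= ip (dth x - dth x') (x - x').
Hypothesis hn : is_norm nrm.
Hypothesis th0 : th 0 = 0.
Hypothesis cX : convex_set X.
Hypothesis clX : closed X.
Hypothesis Xx0 : X x0.
Hypothesis hdc : continuous dth.
Local Notation E := 'rV[R]_n.
Local Notation V := (breg th dth x0).
Implicit Types (u y z : E).

Lemma mirror_obj_cont a (b : R) : continuous (mirror_obj th x0 a b).
Proof.
apply: continuous_of_local_bound => x; set d := dth (x - x0).
have [del del0 Hd] := hgrad (x - x0) ltr01.
exists del => //; exists (n%:R * `|a| + `|b| * (1 + n%:R * `|d|)) => y xy.
have nxy : `|y - x| = `|x - y| by rewrite distrC.
have := Hd (y - x0) I.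
have -> : y - x0 - (x - x0) = y - x by apply/rowP => k; rewrite !mxE; ring.
rewrite nxy mul1r => /(_ xy) hth.
have hd := ip_bound d (y - x); rewrite nxy in hd.
have ha := ip_bound a (x - y).
have -> : mirror_obj th x0 a b x - mirror_obj th x0 a b y = ip a (x - y) -
    b * ((th (y - x0) - th (x - x0) - ip d (y - x)) + ip d (y - x)).
  by rewrite /mirror_obj ipBr; ring.
apply: le_trans (ler_normB _ _) _; rewrite normrM.
have hT := le_trans (ler_normD _ _) (lerD hth hd).
apply: le_trans (lerD ha (ler_wpM2l (normr_ge0 b) hT)) _.
by rewrite le_eqVlt; apply/orP; left; apply/eqP; ring.
Qed.

(* Sublevel sets of the mirror objective are bounded (strong convexity). *)
Lemma mirror_sublevel u y :
  mirror_obj th x0 (- u) 1 y <= mirror_obj th x0 (- u) 1 x0 ->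
  nrm (y - x0) <= 2 * dual_norm nrm (u - dth 0).
Proof.
rewrite /mirror_obj subrr th0 !mul1r !ipNl => hy.
have sc := dgf_strong_convex hgrad hcvx hmono hn (y - x0) 0.
rewrite th0 subr0 add0r in sc.
have hd := ip_le_dual hn (u - dth 0) (y - x0).
rewrite ipBl in hd.
have r0 := nrm_ge0 hn (y - x0); have D0 := dual_norm_ge0 hn (u - dth 0).
set r := nrm (y - x0) in sc hd r0 *; set D := dual_norm nrm _ in hd D0 *.
have : r ^+ 2 <= 2 * D * r by move: sc hd hy; rewrite !ipBr; lra.
nra.
Qed.

(* Existence of a minimizer over the closed set X: restrict to a compact
   sublevel set and apply the extreme value theorem. *)
Lemma mirror_min_exists u :
  exists p, X p /\ forall y, X y -> mirror_obj th x0 (- u) 1 p <= mirror_obj th x0 (- u) 1 y.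
Proof.
set m := mirror_obj th x0 (- u) 1.
pose A := [set y | X y /\ m y <= m x0].
have [c c0 Hc] := nrm_ge_sup hn.
set B := 2 * dual_norm nrm (u - dth 0) / c + `|x0|.
have bA y : A y -> `|y| <= B.
  move=> [_ /mirror_sublevel hy].
  have : `|y - x0| <= 2 * dual_norm nrm (u - dth 0) / c.
    by rewrite ler_pdivlMr // mulrC; exact: le_trans (Hc _) hy.
  have := ler_normD (y - x0) x0; rewrite subrK /B; lra.
have cA : compact A.
  apply: bounded_closed_compact.
    exists B; split; first exact: num_real.
    by move=> M HM y Ay /=; apply: (le_trans (bA y Ay)); exact: ltW.
  apply: closedI => //.
  have := @preimage_closed _ _ m _ _ (@closed_le R (m x0)).
  by apply => x _; exact: mirror_obj_cont.
have A0 : A !=set0 by exists x0; split.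
have [p /set_mem [Xp pA] pmin] :=
  EVT_min_rV A0 cA (continuous_subspaceT (@mirror_obj_cont (- u) 1)).
exists p; split => // y Xy.
have [yA|yA] := leP (m y) (m x0); first by apply: pmin; apply/mem_set.
by apply: (le_trans pA); exact: ltW.
Qed.

Definition mirror_map u : E := projT1 (cid (mirror_min_exists u)).

Lemma mirror_map_in u : X (mirror_map u).
Proof. by rewrite /mirror_map; case: cid => p [] /=. Qed.

Lemma mirror_map_min u y : X y ->
  mirror_obj th x0 (- u) 1 (mirror_map u) <= mirror_obj th x0 (- u) 1 y.
Proof. by rewrite /mirror_map; case: cid => p [] /= _; apply. Qed.

Lemma mirror_map_opt u z : X z ->
  0 <= ip (dth (mirror_map u - x0) - u) (z - mirror_map u).
Proof.
move=> Xz; set p := mirror_map u.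
have pmin y : X y -> 0 + mirror_obj th x0 (- u) 1 p <= 0 + mirror_obj th x0 (- u) 1 y.
  by move=> Xy; rewrite !add0r; exact: mirror_map_min.
have := min_first_order cX (@convex_zero R n X) (mirror_map_in u)
  (@mirror_obj_grad R n th dth hgrad X x0 (- u) 1 p ler01) pmin Xz.
by rewrite /= subrr add0r scale1r [- u + _]addrC.
Qed.

Lemma mirror_map_contract u u' :
  nrm (mirror_map u' - mirror_map u) ^+ 2 <= ip (u' - u) (mirror_map u' - mirror_map u).
Proof.
set p := mirror_map u; set q := mirror_map u'.
have h1 := mirror_map_opt u (mirror_map_in u').
have h2 := mirror_map_opt u' (mirror_map_in u).
have h3 := hmono (q - x0) (p - x0).
have e1 : q - x0 - (p - x0) = q - p by apply/rowP => k; rewrite !mxE; ring.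
have e2 : p - q = - (q - p) by rewrite opprB.
rewrite e1 in h3; rewrite -/p -/q e2 ipNr in h1 h2.
move: h1 h2 h3; rewrite !ipBl; lra.
Qed.

Lemma mirror_map_lipschitz :
  exists K, forall u u', `|mirror_map u - mirror_map u'| <= K * `|u - u'|.
Proof.
have [c c0 Hc] := nrm_ge_sup hn.
exists (n%:R / c ^+ 2) => u u'.
set r := `|mirror_map u - mirror_map u'|.
have r0 : 0 <= r := normr_ge0 _.
have hc := mirror_map_contract u' u.
have hb := le_trans (ler_norm _) (ip_bound (u - u') (mirror_map u - mirror_map u')).
have hcr : (c * r) ^+ 2 <= nrm (mirror_map u - mirror_map u') ^+ 2.
  have cr0 : 0 <= c * r by rewrite mulr_ge0 // ltW.
  by have := Hc (mirror_map u - mirror_map u'); rewrite -/r; nra.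
have key : c ^+ 2 * r ^+ 2 <= n%:R * `|u - u'| * r.
  by rewrite -exprMn; apply: le_trans hcr (le_trans hc hb).
have [->|rpos] := eqVneq r 0; first by rewrite mulr_ge0 ?divr_ge0 ?exprn_ge0 ?(ltW c0).
have rp : 0 < r by rewrite lt_neqAle eq_sym rpos.
rewrite mulrAC ler_pdivlMr ?exprn_gt0 // mulrC.
by move: key; rewrite [r ^+ 2]expr2 mulrA ler_pM2r.
Qed.

Lemma mirror_map_cont : continuous mirror_map.
Proof.
have [K HK] := mirror_map_lipschitz.
by apply: continuous_of_local_bound => u; exists 1 => //; exists K => u' _.
Qed.

Lemma mirror_step z z' zeta (b : R) : X z -> 0 < b ->
  ip zeta (z - z') / b <=
    V z' z - V (mirror_map (b^-1 *: zeta + dth (z' - x0))) z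
    + dual_norm nrm zeta ^+ 2 / (2 * b ^+ 2).
Proof.
move=> Xz b0; set p := mirror_map _.
have h1 := mirror_map_opt (b^-1 *: zeta + dth (z' - x0)) Xz; rewrite -/p in h1.
have tp := breg_three_point th dth x0 z' p z.
have lb := breg_lb hgrad hcvx hmono hn x0 z' p.
have du := ip_le_dual hn zeta (p - z').
set D := dual_norm nrm zeta in du *; set r := nrm (p - z') in du lb.
have yg := young (D / b) r (ltr0Sn R 1).
have -> : D ^+ 2 / (2 * b ^+ 2) = (D / b) ^+ 2 / 2%:R by field; rewrite gt_eqF.
have h4 : ip zeta (p - z') / b <= D / b * r by rewrite mulrAC ler_pM2r ?invr_gt0.
have -> : ip zeta (z - z') = ip zeta (z - p) + ip zeta (p - z').
  by rewrite -ipDr addrA subrK.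
have e : ip (dth (p - x0) - (b^-1 *: zeta + dth (z' - x0))) (z - p) =
    ip (dth (p - x0) - dth (z' - x0)) (z - p) - b^-1 * ip zeta (z - p).
  by rewrite -ipZl -ipBl; congr ip; apply/rowP => k; rewrite !mxE; ring.
rewrite e -tp in h1; lra.
Qed.

Variable beta : nat -> R.

Fixpoint noise_iterates (c : nat -> E) (k : nat) : E :=
  match k with
  | 0 => x0
  | k'.+1 => mirror_map ((beta k')^-1 *: c k' + dth (noise_iterates c k' - x0))
  end.

Lemma noise_regret (c : nat -> E) N z : X z -> (forall i, 0 < beta i) ->
  \sum_(i < N) ip (c i) (z - noise_iterates c i) / beta i <=
    V x0 z + \sum_(i < N) dual_norm nrm (c i) ^+ 2 / (2 * beta i ^+ 2).
Proof.
move=> Xz b0.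
apply: le_trans (ler_sum _ (fun (i : 'I_N) _ =>
  mirror_step (noise_iterates c i) (c i) Xz (b0 i))) _.
rewrite big_split /= (sum_telescope (fun k => V (noise_iterates c k) z)) /=.
have := breg_ge0 hgrad hcvx hmono hn x0 (noise_iterates c N) z; lra.
Qed.

(* The auxiliary points as functions of the matrix whose rows are the first
   i noise vectors; the k-th row is read off by row_at. *)
Definition row_at i (M : 'M[R]_(i, n)) (j : nat) : E :=
  if insub j is Some k then row k M else 0.

Definition noise_point i (M : 'M[R]_(i, n)) : E := noise_iterates (row_at M) i.

Lemma noise_iterates_ext c c' k : (forall j, (j < k)%N -> c j = c' j) ->
  noise_iterates c k = noise_iterates c' k.
Proof.
elim: k => [//|k IH] H /=.
by rewrite H // IH // => j jk; apply: H; exact: ltnW.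
Qed.

Lemma noise_point_mx i (F : nat -> E) :
  noise_point (\matrix_(k < i) F k) = noise_iterates F i.
Proof.
apply: noise_iterates_ext => j ji.
by rewrite /row_at insubT /=; apply/rowP => l; rewrite !mxE.
Qed.

Lemma row_at_cont i j : continuous (fun M : 'M[R]_(i, n) => row_at M j).
Proof.
rewrite /row_at; case: insubP => [k _ _|_]; last exact: cst_continuous.
apply: continuous_of_local_bound => M; exists 1 => //; exists 1 => M' _.
rewrite mul1r; apply: mx_norm_le_entries => // a b; rewrite !mxE.
by have := mx_norm_entry (M - M') k b; rewrite !mxE.
Qed.

Lemma noise_iterates_cont i k :
  continuous (fun M : 'M[R]_(i, n) => noise_iterates (row_at M) k).
Proof.
elim: k => [|k IH] /=; first exact: cst_continuous.
move=> M; apply: (continuous_comp (f := fun M : 'M[R]_(i, n) =>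
  (beta k)^-1 *: row_at M k + dth (noise_iterates (row_at M) k - x0)));
  last exact: mirror_map_cont.
apply: continuousD; first by apply: continuousZl_tmp; exact: row_at_cont.
apply: (continuous_comp (f := fun M : 'M[R]_(i, n) => noise_iterates (row_at M) k - x0));
  last exact: hdc.
apply: (continuousB (f := fun M0 => noise_iterates (row_at M0) k) (g := fun=> x0)).
  exact: IH.
exact: cst_continuous.
Qed.

Lemma noise_point_measurable i : borel_measurable (@noise_point i).
Proof.
move=> A oA; apply: sub_sigma_algebra; apply: open_comp => // M _.
exact: noise_iterates_cont.
Qed.

End MirrorMap.

Unset Implicit Arguments. Set Strict Implicit.

Theorem proposition5 (R : realType) (n : nat) (nrm : 'rV[R]_n -> R)
  (X : set 'rV[R]_n)
  (d : measure_display) (Om : measurableType d) (P : probability Om R)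
  (G : 'rV[R]_n -> Om -> R) (dG : 'rV[R]_n -> Om -> 'rV[R]_n)
  (g : 'rV[R]_n -> R) (dg : 'rV[R]_n -> 'rV[R]_n) (L : R)
  (th : 'rV[R]_n -> R) (dth : 'rV[R]_n -> 'rV[R]_n) (h : 'rV[R]_n -> R)
  (x0 : 'rV[R]_n) (beta : nat -> R) (N : nat) :
  is_norm nrm ->
  convex_set X -> closed X -> X° !=set0 ->
  (forall w x, X x -> is_grad_within X (G ^~ w) x (dG x w)) ->
  (forall x, X x -> P.-integrable setT (fun w => (G x w)%:E) /\
                    (g x)%:E = (\int[P]_w (G x w)%:E)%E) ->
  convex_function X g ->
  (forall x, X x -> is_grad_within X g x (dg x)) ->
  (forall x x', X x -> X x' -> dual_norm nrm (dg x - dg x') <= L * nrm (x - x')) ->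
  (forall x, is_grad_within setT th x (dth x)) -> continuous dth ->
  convex_function setT th ->
  (forall x x', nrm (x - x') ^+ 2 <= ip (dth x - dth x') (x - x')) ->
  th 0 = 0 -> (forall x, th 0 <= th x) ->
  convex_function X h -> {within X, continuous h} ->
  X x0 ->
  (forall i, 2 * L <= beta i) -> (forall i, 0 < beta i) ->
  (0 < N)%N ->
  exists zf : forall i : nat, 'M[R]_(i, n) -> 'rV[R]_n,
    [/\ forall i, borel_measurable (zf i),
        forall M, zf 0%N M = x0,
        forall i M, (i < N)%N -> X (zf i M) &
    forall (ws : nat -> Om) (xs : nat -> 'rV[R]_n),
      xs 0%N = x0 ->
      (forall i, (i < N)%N ->
         is_prox X th dth h (beta i) (dG (xs i) (ws i.+1)) (xs i) x0 (xs i.+1)) ->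
      let f := fun x => g x + h x in
      let zeta := fun i : nat => dG (xs i.-1) (ws i) - dg (xs i.-1) in
      let S := \sum_(i < N) (beta i)^-1 in
      let xhat := S^-1 *: \sum_(i < N) (beta i)^-1 *: xs i.+1 in
      let V := breg th dth x0 in
      forall z, X z ->
        [/\ S * (f xhat - f z) <= \sum_(i < N) (beta i)^-1 * (f (xs i.+1) - f z),
            \sum_(i < N) (beta i)^-1 * (f (xs i.+1) - f z) <=
              V x0 z - V (xs N) z +
              \sum_(i < N) (ip (zeta i.+1) (z - xs i) / beta i +
                            dual_norm nrm (zeta i.+1) ^+ 2 / beta i ^+ 2)
          & V x0 z - V (xs N) z +
              \sum_(i < N) (ip (zeta i.+1) (z - xs i) / beta i +
                            dual_norm nrm (zeta i.+1) ^+ 2 / beta i ^+ 2) <=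
            2 * V x0 z +
              \sum_(i < N) (ip (zeta i.+1) (zf i (\matrix_(k < i) zeta k.+1) - xs i) / beta i +
                            3 / 2 * (dual_norm nrm (zeta i.+1) ^+ 2 / beta i ^+ 2))]].
Proof.
move=> hn cX clX _ _ _ cg gg lip hgrad hdc hcvx hmono th0 _ ch _ Xx0 hbL hb0 N0.
pose zpt := @noise_point R n nrm th dth x0 X hgrad hcvx hmono hn th0 clX Xx0 beta.
exists zpt; split.
- by move=> i; exact: noise_point_measurable.
- by [].
- by move=> [|i] M _ //=; exact: mirror_map_in.
move=> ws xs xs0 hprox f zeta S xhat V z Xz.
have Xxs i : (i <= N)%N -> X (xs i).
  by case: i => [|i] iN; [rewrite xs0 | exact: (hprox i iN).1].
have step (i : 'I_N) := prox_step hn cX cg gg lip ch hgrad hcvx hmono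
  (Xxs i (ltnW (ltn_ord i))) Xz (hbL i) (hb0 i) (hprox i (ltn_ord i)).
pose Z := noise_iterates hgrad hcvx hmono hn th0 clX Xx0 beta (fun j => zeta j.+1).
have reg := noise_regret hgrad hcvx hmono hn th0 cX clX Xx0 (fun j => zeta j.+1) N Xz hb0.
have VN := breg_ge0 hgrad hcvx hmono hn x0 (xs N) z.
split.
-
  apply: (jensen_gap (w := fun i => (beta i)^-1) (xs := fun i => xs i.+1) z cX) => //.
  + exact: convex_add.
  + by move=> i; rewrite invr_gt0.
  + by move=> i iN; exact: Xxs.
- (* sum of the prox-step inequalities, the divergences telescope *)
  apply: le_trans (ler_sum _ (fun i _ => step i)) _.
  by rewrite big_split /= (sum_telescope (fun k => V (xs k) z)) xs0.
- (* split <zeta_i, z - x_i> at the auxiliary point z_i and use its regret *)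
  rewrite (eq_bigr (fun i : 'I_N =>
      (ip (zeta i.+1) (zpt i (\matrix_(k < i) zeta k.+1) - xs i) / beta i +
        3 / 2 * (dual_norm nrm (zeta i.+1) ^+ 2 / beta i ^+ 2)) +
      (ip (zeta i.+1) (z - Z i) / beta i -
        dual_norm nrm (zeta i.+1) ^+ 2 / (2 * beta i ^+ 2)))); last first.
    move=> i _; rewrite /zpt /Z (noise_point_mx _ _ _ _ _ _ _ _ _ (fun k => zeta k.+1)).
    by rewrite !ipBr; field; rewrite gt_eqF.
  by rewrite big_split /= sumrB /V /Z; lra.
Qed.
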